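(* Let $t\in(0,1/2)$ and $s\geq 1$. For $a,b>0$ define $$Q_{t,s}(a,b)=G^{s}\big(ta+(1-t)b,\ tb+(1-t)a\big)\,A^{1-s}(a,b).$$ Then the inequality $Q_{t,s}(a,b)>AG(a,b)$ holds for all $a,b>0$ with $a\neq b$ if and only if $t\geq \frac12-\frac{\sqrt{2s}}{4s}$.
   Context: For $a,b>0$: $G(a,b)=\sqrt{ab}$ is the geometric mean and $A(a,b)=(a+b)/2$ is the arithmetic mean. $AG(a,b)$ is the arithmetic-geometric mean: the common limit of the sequences defined by $a_0=a$, $b_0=b$, $a_{n+1}=(a_n+b_n)/2$, $b_{n+1}=\sqrt{a_nb_n}$. *)

From Stdlib Require Import Reals.
From Coquelicot Require Import Coquelicot.
Open Scope R_scope.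

Definition Gm (a b : R) : R := sqrt (a * b).
Definition Am (a b : R) : R := (a + b) / 2.

Fixpoint agm_seq (a b : R) (n : nat) : R * R :=
  match n with
  | O => (a, b)
  | S m => let p := agm_seq a b m in (Am (fst p) (snd p), Gm (fst p) (snd p))
  end.

(* AG(a,b): the (common) limit of the sequences a_n, b_n; taken as the limit of a_n *)
Definition AG (a b : R) : R := real (Lim_seq (fun n => fst (agm_seq a b n))).

Definition Q (t s a b : R) : R :=
  Rpower (Gm (t * a + (1 - t) * b) (t * b + (1 - t) * a)) s * Rpower (Am a b) (1 - s).

From Stdlib Require Import Reals Lra Psatz.
From Coquelicot Require Import Coquelicot.
Open Scope R_scope.

(* Write A = A(a,b), g = G(a,b), r = 1 - 2t and v = ((a-b)/(a+b))^2.  Then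
   Q_{t,s}(a,b) = A (1 - r^2 v)^(s/2), and AG(a,b) lies between the second
   AGM iterates b_2 = G(A,g) and a_2 = (A+g)/2.
   If 2 s r^2 <= 1, Bernoulli's inequality gives (1 - r^2 v)^s >= 1 - v/2, so
   Q >= A sqrt(1 - v/2) = sqrt((A^2 + g^2)/2) > (A+g)/2 >= AG.
   If 2 s r^2 > 1, take a, b = 1 +- sqrt y with y > 0 small: then
   Q = (1 - r^2 y)^(s/2) < (1 - y)^(1/4) = b_2 <= AG, since to first order in y
   the two sides are 1 - s r^2 y / 2 and 1 - y / 4.
   Finally 2 s (1 - 2t)^2 <= 1 is the condition t >= 1/2 - sqrt(2s)/(4s). *)

Lemma ln_le_sub_1 x : 0 < x -> ln x <= x - 1.
Proof. intros Hx. pose proof (exp_ineq1_le (ln x)) as H. rewrite exp_ln in H; lra. Qed.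

Lemma one_sub_inv_le_ln x : 0 < x -> 1 - / x <= ln x.
Proof.
  intros Hx. pose proof (ln_le_sub_1 (/ x) (Rinv_0_lt_compat x Hx)) as H.
  rewrite ln_Rinv in H; lra.
Qed.

Lemma ln_concave l x y : 0 <= l <= 1 -> 0 < x -> 0 < y ->
  l * ln x + (1 - l) * ln y <= ln (l * x + (1 - l) * y).
Proof.
  intros Hl Hx Hy. set (m := l * x + (1 - l) * y).
  assert (Hm : 0 < m) by (unfold m; nra).
  assert (Htan : forall z, 0 < z -> ln z <= ln m + z / m - 1).
  { intros z Hz. pose proof (ln_le_sub_1 (z / m) (Rdiv_lt_0_compat z m Hz Hm)) as H.
    unfold Rdiv in H |- *. rewrite ln_mult, ln_Rinv in H by (auto with real); lra. }
  assert (Hmean : l * (x / m) + (1 - l) * (y / m) = 1) by (unfold m; field; fold m; lra).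
  pose proof (Htan x Hx). pose proof (Htan y Hy). nra.
Qed.

Lemma Rpower_bernoulli s x : 1 <= s -> -1 < x -> 1 + s * x <= Rpower (1 + x) s.
Proof.
  intros Hs Hx. unfold Rpower.
  destruct (Rle_or_lt (1 + s * x) 0) as [Hneg | Hpos].
  { pose proof (exp_pos (s * ln (1 + x))). lra. }
  assert (Hsinv : 0 < / s <= 1).
  { split; [apply Rinv_0_lt_compat; lra|].
    rewrite <- Rinv_1. apply Rinv_le_contravar; lra. }
  assert (Hln : ln (1 + s * x) <= s * ln (1 + x)).
  { pose proof (ln_concave (/ s) (1 + s * x) 1 ltac:(lra) Hpos Rlt_0_1) as H.
    rewrite ln_1 in H.
    replace (/ s * (1 + s * x) + (1 - / s) * 1) with (1 + x) in H by (field; lra).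
    apply (Rmult_le_compat_l s) in H; [|lra].
    replace (s * (/ s * ln (1 + s * x) + (1 - / s) * 0)) with (ln (1 + s * x)) in H
      by (field; lra).
    exact H. }
  rewrite <- (exp_ln (1 + s * x)) by exact Hpos.
  destruct (Rle_lt_or_eq_dec _ _ Hln) as [Hlt | ->]; [left; now apply exp_increasing | lra].
Qed.

Lemma Gm_le_Am x y : 0 <= x -> 0 <= y -> Gm x y <= Am x y.
Proof.
  intros Hx Hy. unfold Gm, Am. rewrite <- (sqrt_square ((x + y) / 2)) by lra.
  apply sqrt_le_1_alt. pose proof (Rle_0_sqr (x - y)). unfold Rsqr in *. nra.
Qed.

Lemma Gm_lt_Am x y : 0 <= x -> 0 <= y -> x <> y -> Gm x y < Am x y.
Proof.
  intros Hx Hy Hxy. unfold Gm, Am. rewrite <- (sqrt_square ((x + y) / 2)) by lra.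
  apply sqrt_lt_1_alt. assert (0 < (x - y) * (x - y)) by (apply Rsqr_pos_lt; lra). nra.
Qed.

Lemma le_Gm y x : 0 <= y <= x -> y <= Gm x y.
Proof.
  intros Hyx. unfold Gm. rewrite <- (sqrt_square y) at 1 by lra.
  apply sqrt_le_1_alt. nra.
Qed.

Lemma Am_lt_sqrt_mean_sq x y : x <> y -> Am x y < sqrt ((x ^ 2 + y ^ 2) / 2).
Proof.
  intros Hxy. unfold Am. apply (Rle_lt_trans _ (Rabs ((x + y) / 2))); [apply Rle_abs|].
  rewrite <- sqrt_Rsqr_abs. apply sqrt_lt_1_alt. split; [apply Rle_0_sqr|].
  assert (0 < (x - y) * (x - y)) by (apply Rsqr_pos_lt; lra). unfold Rsqr. nra.
Qed.

Lemma agm_seq_S a b n : agm_seq a b (S n) = agm_seq (Am a b) (Gm a b) n.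
Proof.
  induction n as [|n IH]; [reflexivity|].
  change (agm_seq a b (S (S n)))
    with (let p := agm_seq a b (S n) in (Am (fst p) (snd p), Gm (fst p) (snd p))).
  now rewrite IH.
Qed.

Lemma AG_step a b : AG a b = AG (Am a b) (Gm a b).
Proof.
  unfold AG. rewrite <- Lim_seq_incr_1.
  f_equal. apply Lim_seq_ext. intros n. cbv beta. now rewrite agm_seq_S.
Qed.

Lemma agm_seq_between a b n : 0 <= b <= a ->
  b <= snd (agm_seq a b n) <= fst (agm_seq a b n) /\ fst (agm_seq a b n) <= a.
Proof.
  intros Hba. induction n as [|n IH]; [simpl; lra|].
  cbn [agm_seq fst snd].
  set (x := fst (agm_seq a b n)) in *. set (y := snd (agm_seq a b n)) in *.
  pose proof (le_Gm y x ltac:(lra)). pose proof (Gm_le_Am x y ltac:(lra) ltac:(lra)).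
  unfold Am in *. lra.
Qed.

Lemma AG_between a b : 0 <= b <= a -> b <= AG a b <= a.
Proof.
  intros Hba. unfold AG.
  pose proof (Lim_seq_le_loc (fun _ => b) (fun n => fst (agm_seq a b n))) as Hlo.
  pose proof (Lim_seq_le_loc (fun n => fst (agm_seq a b n)) (fun _ => a)) as Hhi.
  rewrite Lim_seq_const in Hlo, Hhi.
  specialize (Hlo ltac:(exists O; intros n _; pose proof (agm_seq_between a b n Hba); lra)).
  specialize (Hhi ltac:(exists O; intros n _; pose proof (agm_seq_between a b n Hba); lra)).
  destruct (Lim_seq (fun n => fst (agm_seq a b n))); simpl in *; lra.
Qed.

Lemma AG_bounds a b : 0 <= a -> 0 <= b ->
  Gm (Am a b) (Gm a b) <= AG a b <= Am (Am a b) (Gm a b).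
Proof.
  intros Ha Hb. rewrite AG_step, AG_step. apply AG_between. split.
  - apply sqrt_pos.
  - apply Gm_le_Am; [unfold Am; lra | apply sqrt_pos].
Qed.

Lemma sq_ratio_lt_1 a b : 0 < a -> 0 < b -> ((a - b) / (a + b)) ^ 2 < 1.
Proof.
  intros Ha Hb. apply (Rmult_lt_reg_r ((a + b) ^ 2)); [nra|].
  replace (((a - b) / (a + b)) ^ 2 * (a + b) ^ 2) with ((a - b) ^ 2) by (field; lra).
  nra.
Qed.

Lemma Q_eq t s a b : 0 < t < 1 -> 0 < a -> 0 < b ->
  Q t s a b = Am a b * Rpower (1 - (1 - 2 * t) ^ 2 * ((a - b) / (a + b)) ^ 2) (s / 2).
Proof.
  intros Ht Ha Hb. unfold Q, Gm. pose proof (sq_ratio_lt_1 a b Ha Hb) as He.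
  set (A := Am a b). set (e := (a - b) / (a + b)) in *. set (w := 1 - (1 - 2 * t) ^ 2 * e ^ 2).
  assert (HA : 0 < A) by (unfold A, Am; lra).
  assert (Hw : 0 < w).
  { assert (0 <= (1 - 2 * t) ^ 2 < 1).
    { split; [apply pow2_ge_0|].
      replace ((1 - 2 * t) ^ 2) with (1 - 4 * (t * (1 - t))) by ring.
      pose proof (Rmult_lt_0_compat t (1 - t) ltac:(lra) ltac:(lra)). lra. }
    pose proof (Rmult_le_compat_r (e ^ 2) ((1 - 2 * t) ^ 2) 1 (pow2_ge_0 e) ltac:(lra)).
    unfold w. lra. }
  assert (HP : (t * a + (1 - t) * b) * (t * b + (1 - t) * a) = A ^ 2 * w).
  { unfold w, e, A, Am. field. lra. }
  assert (HA2 : A ^ 2 = Rpower A 2).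
  { replace 2 with (INR 2) by (simpl; lra). now rewrite Rpower_pow. }
  assert (HA2w : 0 < A ^ 2 * w) by (apply Rmult_lt_0_compat; [apply pow_lt|]; lra).
  rewrite HP, <- Rpower_sqrt, Rpower_mult by exact HA2w.
  rewrite <- Rpower_mult_distr, HA2, Rpower_mult by (try apply pow_lt; lra).
  replace (2 * (/ 2 * s)) with s by field.
  replace (/ 2 * s) with (s / 2) by field.
  transitivity (Rpower A s * Rpower A (1 - s) * Rpower w (s / 2)); [ring|].
  rewrite <- Rpower_plus. replace (s + (1 - s)) with 1 by ring. now rewrite Rpower_1.
Qed.

Lemma sqrt_le_Rpower_of_threshold s r v : 1 <= s -> 2 * s * r ^ 2 <= 1 -> 0 <= v < 1 ->
  sqrt (1 - v / 2) <= Rpower (1 - r ^ 2 * v) (s / 2).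
Proof.
  intros Hs Hr Hv.
  assert (Hsr : s * r ^ 2 * v <= v / 2) by nra.
  assert (Hr2 : 0 <= r ^ 2 <= 1 / 2) by (split; [apply pow2_ge_0 | nra]).
  assert (Hw : 0 < 1 - r ^ 2 * v) by nra.
  pose proof (Rpower_bernoulli s (- (r ^ 2 * v)) Hs ltac:(nra)) as Hb.
  replace (1 + - (r ^ 2 * v)) with (1 - r ^ 2 * v) in Hb by ring.
  replace (s / 2) with (s * / 2) by field.
  rewrite <- Rpower_mult, Rpower_sqrt by (apply exp_pos).
  apply sqrt_le_1_alt. lra.
Qed.

Lemma exists_Rpower_lt_of_threshold s r : 0 < s -> r ^ 2 <= 1 -> 1 < 2 * s * r ^ 2 ->
  exists y, 0 < y < 1 /\ Rpower (1 - r ^ 2 * y) (s / 2) < Rpower (1 - y) (/ 4).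
Proof.
  intros Hs Hr1 Hc. set (c := 2 * s * r ^ 2) in *.
  (* any y with c (1 - y) > 1 works; this one gives c (1 - y) = (c + 1) / 2 *)
  set (y := (c - 1) / (2 * c)).
  assert (Hyc : y * (2 * c) = c - 1) by (unfold y; field; lra).
  assert (Hy : 0 < y < 1 / 2) by nra.
  exists y. split; [lra|].
  unfold Rpower. apply exp_increasing.
  pose proof (ln_le_sub_1 (1 - r ^ 2 * y) ltac:(nra)) as Hl.
  pose proof (one_sub_inv_le_ln (1 - y) ltac:(lra)) as Hr.
  assert (Hinv : / (1 - y) < c).
  { apply (Rmult_lt_reg_r (1 - y)); [lra|]. rewrite Rinv_l by lra. nra. }
  assert (Hz : 1 - / (1 - y) = - (y * / (1 - y))) by (field; lra).
  assert (y * / (1 - y) < y * c) by (apply Rmult_lt_compat_l; lra).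
  assert (s / 2 * ln (1 - r ^ 2 * y) <= - (c * y) / 4) by (unfold c; nra).
  lra.
Qed.

Lemma AG_lt_Q t s a b : 0 < t < 1 / 2 -> 1 <= s -> 2 * s * (1 - 2 * t) ^ 2 <= 1 ->
  0 < a -> 0 < b -> a <> b -> AG a b < Q t s a b.
Proof.
  intros Ht Hs Hthr Ha Hb Hab. rewrite Q_eq by lra.
  set (A := Am a b). set (g := Gm a b). set (v := ((a - b) / (a + b)) ^ 2).
  assert (HA : 0 < A) by (unfold A, Am; lra).
  assert (Hv : 0 <= v < 1) by (split; [apply pow2_ge_0 | apply sq_ratio_lt_1; lra]).
  assert (Hgg : g ^ 2 = a * b) by (apply pow2_sqrt; nra).
  assert (Hgap : g <> A) by (apply Rlt_not_eq, Gm_lt_Am; lra).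
  assert (Hrms : (A ^ 2 + g ^ 2) / 2 = A ^ 2 * (1 - v / 2)).
  { rewrite Hgg. unfold v, A, Am. field. lra. }
  destruct (AG_bounds a b ltac:(lra) ltac:(lra)) as [_ Hup]. fold A g in Hup.
  pose proof (Am_lt_sqrt_mean_sq A g (not_eq_sym Hgap)) as Hmean.
  rewrite Hrms, sqrt_mult_alt, sqrt_pow2 in Hmean by (try apply pow2_ge_0; lra).
  pose proof (sqrt_le_Rpower_of_threshold s (1 - 2 * t) v Hs Hthr Hv) as Hq.
  apply (Rmult_le_compat_l A) in Hq; lra.
Qed.

Lemma exists_Q_lt_AG t s : 0 < t < 1 / 2 -> 1 <= s -> 1 < 2 * s * (1 - 2 * t) ^ 2 ->
  exists a b, 0 < a /\ 0 < b /\ a <> b /\ Q t s a b < AG a b.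
Proof.
  intros Ht Hs Hthr.
  destruct (exists_Rpower_lt_of_threshold s (1 - 2 * t) ltac:(lra) ltac:(nra) Hthr)
    as (y & Hy & Hlt).
  set (x := sqrt y). assert (Hx : 0 < x) by (apply sqrt_lt_R0; lra).
  assert (Hxx : x ^ 2 = y) by (apply pow2_sqrt; lra).
  assert (Hx1 : x < 1) by nra.
  exists (1 + x), (1 - x). repeat split; try lra.
  rewrite Q_eq by lra.
  assert (HA : Am (1 + x) (1 - x) = 1) by (unfold Am; field).
  assert (Hv : ((1 + x - (1 - x)) / (1 + x + (1 - x))) ^ 2 = y) by (rewrite <- Hxx; field; lra).
  rewrite HA, Hv, Rmult_1_l.
  destruct (AG_bounds (1 + x) (1 - x) ltac:(lra) ltac:(lra)) as [Hlow _].
  assert (Hb2 : Gm (Am (1 + x) (1 - x)) (Gm (1 + x) (1 - x)) = Rpower (1 - y) (/ 4)).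
  { rewrite HA. unfold Gm. rewrite Rmult_1_l.
    replace ((1 + x) * (1 - x)) with (1 - y) by (rewrite <- Hxx; ring).
    rewrite <- !Rpower_sqrt, Rpower_mult by (try apply sqrt_lt_R0; lra).
    f_equal. field. }
  lra.
Qed.

Lemma threshold_iff t s : 0 < s -> t <= 1 / 2 ->
  (t >= 1 / 2 - sqrt (2 * s) / (4 * s) <-> 2 * s * (1 - 2 * t) ^ 2 <= 1).
Proof.
  intros Hs Ht.
  set (k := sqrt (2 * s) / (4 * s)).
  assert (Hk : 0 < k) by (apply Rdiv_lt_0_compat; [apply sqrt_lt_R0 |]; lra).
  (* 2k is the positive root of 2 s x^2 = 1 *)
  assert (Hkk : 2 * s * (2 * k) ^ 2 = 1).
  { unfold k. replace ((2 * (sqrt (2 * s) / (4 * s))) ^ 2) with (sqrt (2 * s) ^ 2 / (4 * s ^ 2))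
      by (field; lra).
    rewrite pow2_sqrt by lra. field. lra. }
  split; intros H.
  - assert (Hsq : (1 - 2 * t) ^ 2 <= (2 * k) ^ 2) by (apply pow_incr; lra).
    assert (2 * s * (1 - 2 * t) ^ 2 <= 2 * s * (2 * k) ^ 2) by (apply Rmult_le_compat_l; lra).
    lra.
  - destruct (Rle_or_lt (1 - 2 * t) (2 * k)) as [Hle | Hgt]; [lra|].
    assert (Hsq : (2 * k) ^ 2 < (1 - 2 * t) ^ 2) by nra.
    assert (2 * s * (2 * k) ^ 2 < 2 * s * (1 - 2 * t) ^ 2) by (apply Rmult_lt_compat_l; lra).
    lra.
Qed.

Theorem theorem1p1 (t s : R) (ht : 0 < t < 1 / 2) (hs : 1 <= s) :
  (forall a b : R, 0 < a -> 0 < b -> a <> b -> Q t s a b > AG a b) <->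
  t >= 1 / 2 - sqrt (2 * s) / (4 * s).
Proof.
  rewrite threshold_iff by lra. split.
  - intros HQ. destruct (Rle_or_lt (2 * s * (1 - 2 * t) ^ 2) 1) as [Hle | Hgt]; [exact Hle|].
    destruct (exists_Q_lt_AG t s ht hs Hgt) as (a & b & Ha & Hb & Hab & Hlt).
    specialize (HQ a b Ha Hb Hab). lra.
  - intros Hthr a b Ha Hb Hab. now apply Rlt_gt, AG_lt_Q.
Qed.
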